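(* Let $X$ be a nonempty set and $F\colon X^*\to X\cup\{\varepsilon\}$ an $\varepsilon$-standard operation. The following are equivalent: (i) $F$ is associative and range-idempotent; (ii) $F$ is associative and $F(F(x),F(x))=F(x)$ for every $x\in X$; (iii) $F$ is preassociative, unarily quasi-range-idempotent, and range-idempotent; (iv) $F$ is preassociative, unarily quasi-range-idempotent, and satisfies $F_1\circ F_1=F_1$ and $F(F(x),F(x))=F(x)$ for every $x\in X$.
   Context: $X^*=\bigcup_{n\geqslant 0}X^n$ is the set of finite tuples over $X$, $X^0=\{\varepsilon\}$ with $\varepsilon\notin X$ the empty tuple; $F(\mathbf{x},\mathbf{y})$ denotes $F$ applied to the concatenation, concatenation with $\varepsilon$ leaving tuples unchanged. $F_n=F|_{X^n}$, $F^{\flat}=F|_{X^*\setminus\{\varepsilon\}}$. $F$ is $\varepsilon$-standard if $F(\varepsilon)=\varepsilon$ and $F(\mathbf{x})\neq\varepsilon$ for $\mathbf{x}\neq\varepsilon$. $F$ is associative if $F(\mathbf{x},\mathbf{y},\mathbf{z})=F(\mathbf{x},F(\mathbf{y}),\mathbf{z})$ for all $\mathbf{x},\mathbf{y},\mathbf{z}\in X^*$ (a value $\varepsilon$ treated as the empty tuple). $F$ is preassociative if $F(\mathbf{y})=F(\mathbf{y}')$ implies $F(\mathbf{x},\mathbf{y},\mathbf{z})=F(\mathbf{x},\mathbf{y}',\mathbf{z})$ for all tuples. $F$ is unarily quasi-range-idempotent if $\mathrm{ran}(F_1)=\mathrm{ran}(F^{\flat})$. $F$ is range-idempotent if $F(x,\ldots,x)=x$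 ($x$ repeated $k$ times) for every $x\in\mathrm{ran}(F^{\flat})$ and every integer $k\geqslant 1$. *)

(* Tuples over X are lists; X ∪ {ε} is option X (None = ε). *)
From Stdlib Require Import List.
Import ListNotations.

Definition tup {X : Type} (o : option X) : list X :=
  match o with None => [] | Some a => [a] end.

Definition eps_standard {X : Type} (F : list X -> option X) : Prop :=
  F [] = None /\ (forall x : list X, x <> [] -> F x <> None).

Definition associative {X : Type} (F : list X -> option X) : Prop :=
  forall x y z : list X, F (x ++ y ++ z) = F (x ++ tup (F y) ++ z).

Definition preassociative {X : Type} (F : list X -> option X) : Prop :=
  forall y y' : list X, F y = F y' ->
    forall x z : list X, F (x ++ y ++ z) = F (x ++ y' ++ z).

Definition unarily_quasi_range_idempotent {X : Type} (F : list X -> option X) : Prop :=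
  forall v : option X,
    (exists a : X, F [a] = v) <-> (exists x : list X, x <> [] /\ F x = v).

Definition range_idempotent {X : Type} (F : list X -> option X) : Prop :=
  forall a : X, (exists x : list X, x <> [] /\ F x = Some a) ->
    forall k : nat, 1 <= k -> F (repeat a k) = Some a.

Definition F1_idempotent {X : Type} (F : list X -> option X) : Prop :=
  forall a : X, F (tup (F [a])) = F [a].

Definition F1_square {X : Type} (F : list X -> option X) : Prop :=
  forall a : X, F (tup (F [a]) ++ tup (F [a])) = F [a].

(* An associative F is idempotent on its own values, F (F y) = F y, so a value
   b = F y satisfies F b = b and then F (b, ..., b) = b follows from F (b, b) = b
   by associativity.  Conversely, preassociativity upgrades to associativity as
   soon as F (F y) = F y for nonempty y, which is exactly the k = 1 case of
   range-idempotence, and which unary quasi-range-idempotence reduces to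
   F_1 ∘ F_1 = F_1 because every value of F is already a value of F_1. *)

From Stdlib Require Import List.
Import ListNotations.

Section EpsStandardOperations.

Variables (X : Type) (F : list X -> option X).

Definition idempotent_on_values : Prop :=
  forall y : list X, y <> [] -> F (tup (F y)) = F y.

Lemma eps_standard_value : eps_standard F ->
  forall x : list X, x <> [] -> exists b : X, F x = Some b.
Proof.
  intros [_ Hne] x Hx.
  destruct (F x) as [b|] eqn:E; [now exists b | now destruct (Hne x Hx)].
Qed.

Lemma associative_idempotent_tup : associative F ->
  forall y : list X, F (tup (F y)) = F y.
Proof.
  intros Ha y. pose proof (Ha [] y []) as H. simpl in H.
  now rewrite !app_nil_r in H.
Qed.

Lemma associative_preassociative : associative F -> preassociative F.
Proof. intros Ha y y' E x z. now rewrite Ha, E, <- Ha. Qed.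

Lemma preassociative_associative : F [] = None -> preassociative F ->
  idempotent_on_values -> associative F.
Proof.
  intros H0 Hp Hid x [|b y] z.
  - simpl. now rewrite H0.
  - apply Hp. symmetry. now apply Hid.
Qed.

Lemma associative_unarily_quasi_range_idempotent : eps_standard F ->
  associative F -> unarily_quasi_range_idempotent F.
Proof.
  intros HF Ha v; split.
  - intros [a Hav]. now exists [a].
  - intros [x [Hx Hxv]]. destruct (eps_standard_value HF x Hx) as [b Hb].
    exists b. rewrite <- Hxv. pose proof (associative_idempotent_tup Ha x) as Hid.
    now rewrite Hb in Hid |- *.
Qed.

Lemma associative_range_idempotent : associative F -> F1_square F ->
  range_idempotent F.
Proof.
  intros Ha Hsq a [x [_ Hxa]].
  assert (Ha1 : F [a] = Some a).
  { pose proof (associative_idempotent_tup Ha x) as Hid. now rewrite Hxa in Hid. }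
  assert (Ha2 : F [a; a] = Some a) by (pose proof (Hsq a) as H; now rewrite Ha1 in H).
  intros [|k] Hk; [inversion Hk|]. clear Hk.
  induction k as [|k IH]; [exact Ha1|].
  change (repeat a (S (S k))) with ([a] ++ repeat a (S k)).
  rewrite <- (app_nil_r (repeat a (S k))).
  now rewrite Ha, IH.
Qed.

Lemma range_idempotent_value : eps_standard F -> range_idempotent F ->
  forall (y : list X) (k : nat), y <> [] -> 1 <= k ->
  exists b : X, F y = Some b /\ F (repeat b k) = Some b.
Proof.
  intros HF Hri y k Hy Hk. destruct (eps_standard_value HF y Hy) as [b Hb].
  exists b. split; [exact Hb|]. apply Hri; [now exists y | exact Hk].
Qed.

Lemma range_idempotent_idempotent_on_values : eps_standard F ->
  range_idempotent F -> idempotent_on_values.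
Proof.
  intros HF Hri y Hy.
  destruct (range_idempotent_value HF Hri y 1 Hy (le_n 1)) as [b [Hb Hb1]].
  now rewrite Hb.
Qed.

Lemma range_idempotent_F1_idempotent : eps_standard F ->
  range_idempotent F -> F1_idempotent F.
Proof.
  intros HF Hri a. now apply range_idempotent_idempotent_on_values.
Qed.

Lemma range_idempotent_F1_square : eps_standard F ->
  range_idempotent F -> F1_square F.
Proof.
  intros HF Hri a.
  destruct (range_idempotent_value HF Hri [a] 2 ltac:(discriminate) (le_S _ _ (le_n 1)))
    as [b [Hb Hb2]].
  now rewrite Hb.
Qed.

Lemma F1_idempotent_idempotent_on_values : eps_standard F ->
  unarily_quasi_range_idempotent F -> F1_idempotent F -> idempotent_on_values.
Proof.
  intros HF Huq Hi1 y Hy.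
  destruct (proj2 (Huq (F y)) (ex_intro _ y (conj Hy eq_refl))) as [a Ha].
  rewrite <- Ha. apply Hi1.
Qed.

End EpsStandardOperations.

Theorem lemma5p6 (X : Type) (HX : inhabited X) (F : list X -> option X)
  (HF : eps_standard F) :
  (associative F /\ range_idempotent F <->
   associative F /\ F1_square F) /\
  (associative F /\ range_idempotent F <->
   preassociative F /\ unarily_quasi_range_idempotent F /\ range_idempotent F) /\
  (associative F /\ range_idempotent F <->
   preassociative F /\ unarily_quasi_range_idempotent F /\
   F1_idempotent F /\ F1_square F).
Proof.
  pose proof (proj1 HF) as HF0.
  split; [|split]; split.
  - intros [Ha Hri]. split; [exact Ha | now apply range_idempotent_F1_square].
  - intros [Ha Hsq]. split; [exact Ha | now apply associative_range_idempotent].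
  - intros [Ha Hri]. split; [|split];
      [now apply associative_preassociative
      | now apply associative_unarily_quasi_range_idempotent | exact Hri].
  - intros [Hp [_ Hri]]. split; [|exact Hri].
    apply preassociative_associative; [exact HF0 | exact Hp |].
    now apply range_idempotent_idempotent_on_values.
  - intros [Ha Hri]. split; [|split; [|split]];
      [now apply associative_preassociative
      | now apply associative_unarily_quasi_range_idempotent
      | now apply range_idempotent_F1_idempotent
      | now apply range_idempotent_F1_square].
  - intros [Hp [Huq [Hi1 Hsq]]].
    assert (Ha : associative F).
    { apply preassociative_associative; [exact HF0 | exact Hp |].
      now apply F1_idempotent_idempotent_on_values. }
    split; [exact Ha | now apply associative_range_idempotent].
Qed.
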